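(* Let $G$ be a finite group and $p$ a prime; all sums below are over nonidentity $p$-subgroups of $G$. Then: (i) $\mathcal S^*_G$ has weighting $k^H=\sum_K\mu(H,K)$, coweighting $k_K=-\mu(K)$, and $\chi(\mathcal S^*_G)=|G|\chi(\mathcal T^*_G)$. (ii) $\mathcal T^*_G$ has weighting $k^H=|G|^{-1}\sum_K\mu(H,K)$, coweighting $k_K=-|G|^{-1}\mu(K)$, and $\chi(\mathcal T^*_G)=\sum_{[K]}\frac{-\mu(K)}{|\mathcal T^*_G(K)|}$. (iii) $\mathcal L^*_G$ has weighting $k^H=|G|^{-1}\sum_K\mu(H,K)|O^pC_G(K)|$, coweighting $k_K=-|G|^{-1}\mu(K)|O^pC_G(K)|$, and $\chi(\mathcal L^*_G)=\sum_{[K]}\frac{-\mu(K)}{|\mathcal L^*_G(K)|}$. (iv) $\mathcal F^*_G$ has weighting $k^H=|G|^{-1}\sum_K\mu(H,K)|C_G(K)|$, coweighting $k_K=-|G|^{-1}\mu(K)|C_G(K)|$, and $\chi(\mathcal F^*_G)=\sum_{[K]}\frac{-\mu(K)}{|\mathcal F^*_G(K)|}$. (v) $\mathcal O^*_G$ has weighting $k^H=|G|^{-1}|H|\sum_K\mu(H,K)$, coweighting $k_K=|G|^{-1}\sum_H|H|\mu(H,K)$, and $\chi(\mathcal O^*_G)=|G|^{-1}\sum_{H,K}|H|\mu(H,K)$. Here $\sum_{[K]}$ runs over the $G$-conjugacy classes of nonidentity $p$-subgroups $K$.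
   Context: For subgroups $H,K\le G$ write $N_G(H,K)=\{g\in G: g^{-1}Hg\le K\}$; $O^p(X)$ is the smallest normal subgroup of a finite group $X$ with $p$-group quotient. Categories with objects the nonidentity $p$-subgroups of $G$ and composition induced by multiplication in $G$: $\mathcal S^*_G$ the poset under inclusion; $\mathcal T^*_G(H,K)=N_G(H,K)$; $\mathcal L^*_G(H,K)=O^p(C_G(H))\backslash N_G(H,K)$; $\mathcal F^*_G(H,K)=C_G(H)\backslash N_G(H,K)$; $\mathcal O^*_G(H,K)=N_G(H,K)/K$; $\mathcal C(K)=\mathcal C(K,K)$. Leinster: for a finite category $\mathcal C$, a weighting is $k^\bullet$ with $\sum_b|\mathcal C(a,b)|k^b=1$ for all $a$, a coweighting is $k_\bullet$ with $\sum_ak_a|\mathcal C(a,b)|=1$ for all $b$, and if both exist $\chi(\mathcal C)=\sum_bk^b=\sum_ak_a$. $\mu(H,K)$ is the Möbius function of the poset of all subgroups of $G$ ($\mu(H,H)=1$, $\mu(H,K)=-\sum_{H\le L<K}\mu(H,L)$ for $H<K$, $0$ if $H\not\le K$), $\mu(K)=\mu(1,K)$. *)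

From HB Require Import structures.
From mathcomp Require Import all_boot all_order all_algebra all_fingroup all_solvable.
From Stdlib Require Import ClassicalEpsilon.
Set Implicit Arguments. Unset Strict Implicit. Unset Printing Implicit Defensive.
Import GRing.Theory Num.Theory.
Local Open Scope ring_scope.

Section Defs.
Variable gT : finGroupType.

(* mu_fuel n H K computes mu(H,K) by the defining recursion
   mu(H,H)=1, mu(H,K) = - sum_{H <= L < K} mu(H,L), mu(H,K)=0 if H not <= K;
   the fuel n = #|K| suffices since L \proper K implies #|L| < #|K|. *)
Fixpoint mu_fuel (n : nat) (H K : {group gT}) : rat :=
  if H == K then 1%R
  else if ~~ (H \subset K) then 0%R
  else match n with
       | 0%N => 0%R
       | n'.+1 => - \sum_(L : {group gT} | (H \subset L) && (L \proper K)) mu_fuel n' H L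
       end.

Definition mu (H K : {group gT}) : rat := mu_fuel #|K| H K.

Definition mu1 (K : {group gT}) : rat := mu 1%G K.

Definition Oup (p : nat) (X : {set gT}) : {set gT} :=
  \bigcap_(N : {group gT} | (N <| X)%g && (p.-group (X / N))%g) N.

Variables (G : {group gT}) (p : nat).

Definition pobj : {set {group gT}} :=
  [set H : {group gT} | [&& H \subset G, (p.-group H)%g & H :!=: 1%g]].

(* N_G(H,K) = {g in G | g^-1 H g <= K}  (H :^ g = g^-1 H g in mathcomp) *)
Definition NGHK (H K : {group gT}) : {set gT} := [set g in G | (H :^ g)%g \subset K].

(* cardinalities of hom-sets of the five categories *)
Definition homS (H K : {group gT}) : nat := H \subset K.
Definition homT (H K : {group gT}) : nat := #|NGHK H K|.
Definition homL (H K : {group gT}) : nat := #|rcosets (Oup p 'C_G(H)%g) (NGHK H K)|.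
Definition homF (H K : {group gT}) : nat := #|rcosets 'C_G(H)%g (NGHK H K)|.
Definition homO (H K : {group gT}) : nat := #|lcosets K (NGHK H K)|.

Definition pclasses : {set {set {group gT}}} := [set orbit 'JG%act G%g K | K in pobj].
Definition crep (X : {set {group gT}}) : {group gT} := odflt 1%G [pick K in X].

End Defs.

Section Leinster.
Variable gT : finGroupType.
Variables (obj : {set {group gT}}) (hom : {group gT} -> {group gT} -> nat).

Definition is_weighting (k : {group gT} -> rat) : Prop :=
  forall a, a \in obj -> \sum_(b in obj) (hom a b)%:R * k b = 1.

Definition is_coweighting (k : {group gT} -> rat) : Prop :=
  forall b, b \in obj -> \sum_(a in obj) k a * (hom a b)%:R = 1.

(* x is the Euler characteristic: a weighting and a coweighting exist and
   the sum of the weighting is x (this is independent of the choices). *)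
Definition euler_char_is (x : rat) : Prop :=
  exists kw kc, is_weighting kw /\ is_coweighting kc /\ \sum_(b in obj) kw b = x.

Definition chi : rat := epsilon (inhabits 0) euler_char_is.
End Leinster.

From HB Require Import structures.
From mathcomp Require Import all_boot all_order all_algebra all_fingroup all_solvable.
From mathcomp Require Import ring.
From Stdlib Require Import ClassicalEpsilon.
Set Implicit Arguments. Unset Strict Implicit. Unset Printing Implicit Defensive.
Import GRing.Theory Num.Theory.
Local Open Scope ring_scope.

(* Each hom-set is a transporter N_G(H,K) = {g | H^g <= K} modulo free actions
   of groups of orders c(H) and d(K): |hom(H,K)| c(H) d(K) = |N_G(H,K)|.  For a
   conjugation-invariant f, averaging over G gives
   sum_K |N_G(H,K)| f(K) = |G| sum_(K >= H) f(K), so weightings and coweightings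
   reduce to Moebius inversion on the poset of nonidentity p-subgroups, which
   is convex in the subgroup lattice.  The Euler characteristic is the total
   coweighting; grouping it by conjugacy classes (|G : N_G(K)| conjugates, and
   |T(K)| = |N_G(K)|) gives the class sums. *)

Section Mobius.
Variable gT : finGroupType.
Implicit Types H K L : {group gT}.

Lemma mu_fuel_enough n m H K : (#|K| <= n)%N -> (#|K| <= m)%N ->
  mu_fuel n H K = mu_fuel m H K.
Proof.
elim: n m K => [|n IHn] m K Kn Km.
  by have := cardG_gt0 K; rewrite leqNgt ltnS Kn.
case: m Km => [|m] Km; first by have := cardG_gt0 K; rewrite leqNgt ltnS Km.
rewrite /=; case: (H == K) => //; case: (H \subset K) => //=.
congr (- _); apply: eq_bigr => L /andP[_ /proper_card ltLK].
by apply: IHn; rewrite -ltnS (leq_trans ltLK).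
Qed.

Lemma muE H K : mu H K = if H == K then 1 else if ~~ (H \subset K) then 0
  else - \sum_(L : {group gT} | (H \subset L) && (L \proper K)) mu H L.
Proof.
rewrite /mu; have := cardG_gt0 K; case eK: #|K| => [|n] //= _.
case: (H == K) => //; case: (H \subset K) => //=.
congr (- _); apply: eq_bigr => L /andP[_ /proper_card ltLK].
by apply: mu_fuel_enough; rewrite // -ltnS -eK.
Qed.

Lemma mu_eq0 H K : ~~ (H \subset K) -> mu H K = 0.
Proof.
move=> nsHK; rewrite muE (negPf nsHK); case: eqP => // eHK.
by rewrite eHK subxx in nsHK.
Qed.

Lemma sum_mu_zeta H K : \sum_(L : {group gT}) mu H L * (L \subset K)%:R = (H == K)%:R.
Proof.
rewrite (eq_bigr (fun L => if (H \subset L) && (L \subset K) then mu H L else 0));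
  last first.
  move=> L _; have [sHL|/mu_eq0->] := boolP (H \subset L); last by rewrite mul0r.
  by case: (L \subset K); rewrite ?mulr1 ?mulr0.
rewrite -big_mkcond /=; have [sHK|nsHK] := boolP (H \subset K); last first.
  rewrite big_pred0 => [|L]; last first.
    by apply/negP => /andP[sHL sLK]; case/negP: nsHK; apply: subset_trans sLK.
  by case: eqP => // eHK; rewrite eHK subxx in nsHK.
have [<-|neHK] := eqVneq H K.
  rewrite (big_pred1 H) ?muE ?eqxx // => L.
  by rewrite /= -[L == H]val_eqE /= eqEsubset andbC.
rewrite (bigD1 K) /=; last by rewrite sHK subxx.
rewrite muE (negPf neHK) sHK /= addrC; apply/eqP; rewrite subr_eq0; apply/eqP.
apply: eq_bigl => L; rewrite -andbA properEneq [(_ != _) && _]andbC.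
by rewrite -val_eqE.
Qed.

(* The zeta matrix has [mu] as a left inverse by [sum_mu_zeta]; square matrices
   then commute with their one-sided inverses. *)
Lemma sum_zeta_mu H K : \sum_(L : {group gT}) (H \subset L)%:R * mu L K = (H == K)%:R.
Proof.
pose n := #|{: {group gT}}|; pose ev (i : 'I_n) : {group gT} := enum_val i.
have sum_ev (F : {group gT} -> rat) : \sum_(L : {group gT}) F L = \sum_(i < n) F (ev i).
  exact: big_enum_val.
pose M := \matrix_(i, j) mu (ev i) (ev j).
pose Z := \matrix_(i, j) ((ev i \subset ev j)%:R : rat).
have MZ : M *m Z = 1%:M.
  apply/matrixP => i j; rewrite !mxE.
  under eq_bigr do rewrite !mxE.
  by rewrite -(sum_ev (fun L => mu (ev i) L * (L \subset ev j)%:R)) sum_mu_zeta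
    (inj_eq (bij_inj (@enum_val_bij _))).
have := congr1 (fun A : 'M[rat]_n => A (enum_rank H) (enum_rank K)) (mulmx1C MZ).
rewrite /= !mxE => eZM; rewrite -(inj_eq enum_rank_inj) -eZM sum_ev.
by apply: eq_bigr => k _; rewrite !mxE /ev !enum_rankK.
Qed.

Lemma conjG_bij x : bijective (fun L : {group gT} => (L :^ x)%G).
Proof.
by exists (fun L : {group gT} => (L :^ x^-1)%G) => L; apply: val_inj;
  rewrite /= ?conjsgK ?conjsgKV.
Qed.

Lemma muJ x H K : mu (H :^ x)%G (K :^ x)%G = mu H K.
Proof.
elim: {K}_.+1 {-2}K (ltnSn #|K|) => // n IHn K ltKn.
rewrite muE [RHS]muE (inj_eq (bij_inj (conjG_bij x))) /= conjSg.
case: (H == K) => //; case: (H \subset K) => //=; congr (- _).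
rewrite (reindex (fun L : {group gT} => (L :^ x)%G)) /=; last first.
  exact: onW_bij (conjG_bij x).
apply: eq_big => L; first by rewrite /= conjSg properJ.
move=> /andP[_]; rewrite properJ => /proper_card ltLK; apply: IHn.
exact: leq_trans ltLK _.
Qed.

End Mobius.

Section CosetCounting.
Variable gT : finGroupType.
Implicit Types (A : {set gT}) (H : {group gT}).
Local Open Scope group_scope.

Lemma rcosets_partition_closed H A : H * A \subset A -> partition (rcosets H A) A.
Proof.
move=> sHA; have defHx x : x \in A -> [set y in A | rcoset H x == rcoset H y] = H :* x.
  move=> Ax; apply/setP => y; rewrite inE !rcosetE (sameP eqP rcoset_eqP) rcoset_sym.
  by apply/andb_idl => /rcosetP[h Hh ->]; apply: (subsetP sHA); apply: mem_mulg.
have := preim_partitionP (rcoset H) A; congr (partition _ _); apply/setP => C.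
by apply/imsetP/rcosetsP => -[x Ax ->]; exists x; rewrite ?defHx.
Qed.

Lemma card_rcosets_closed H A : H * A \subset A -> (#|rcosets H A| * #|H| = #|A|)%N.
Proof.
move=> sHA; rewrite (card_uniform_partition (n := #|H|) _ (rcosets_partition_closed sHA)) //.
by move=> _ /rcosetsP[x _ ->]; rewrite card_rcoset.
Qed.

Lemma card_lcosets_closed H A : A * H \subset A -> (#|lcosets H A| * #|H| = #|A|)%N.
Proof.
move=> sAH; rewrite -(card_invg (lcosets H A)) invg_lcosets invGid -[RHS](card_invg A).
by apply: card_rcosets_closed; rewrite -invSg invMg invGid invgK.
Qed.

End CosetCounting.

Section EulerCharacteristic.
Variable gT : finGroupType.
Variables (obj : {set {group gT}}) (hom : {group gT} -> {group gT} -> nat).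
Implicit Types k : {group gT} -> rat.

Lemma eq_in_weighting k1 k2 : {in obj, k1 =1 k2} ->
  is_weighting obj hom k1 -> is_weighting obj hom k2.
Proof. by move=> e w a aO; rewrite -[RHS](w a aO); apply: eq_bigr => b /e->. Qed.

Lemma eq_in_coweighting k1 k2 : {in obj, k1 =1 k2} ->
  is_coweighting obj hom k1 -> is_coweighting obj hom k2.
Proof. by move=> e w b bO; rewrite -[RHS](w b bO); apply: eq_bigr => a /e->. Qed.

Lemma sum_weighting_coweighting kw kc :
  is_weighting obj hom kw -> is_coweighting obj hom kc ->
  \sum_(b in obj) kw b = \sum_(a in obj) kc a.
Proof.
move=> w c; transitivity (\sum_(b in obj) \sum_(a in obj) kc a * (hom a b)%:R * kw b).
  by apply: eq_bigr => b bO; rewrite -mulr_suml c // mul1r.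
rewrite exchange_big; apply: eq_bigr => a aO.
by under eq_bigr do rewrite -mulrA; rewrite -mulr_sumr w // mulr1.
Qed.

Lemma chiE kw kc : is_weighting obj hom kw -> is_coweighting obj hom kc ->
  chi obj hom = \sum_(a in obj) kc a.
Proof.
move=> w c; have ex : exists x, euler_char_is obj hom x.
  by exists (\sum_(b in obj) kw b), kw, kc.
rewrite /chi; have [kw' [kc' [w' [_ <-]]]] := epsilon_spec (inhabits 0) _ ex.
exact: sum_weighting_coweighting w' c.
Qed.

End EulerCharacteristic.

Lemma natr_card_neq0 (gT : finGroupType) (H : {group gT}) : (#|H|%:R : rat) != 0.
Proof. by rewrite pnatr_eq0 -lt0n cardG_gt0. Qed.

Section PSubgroupPoset.
Variables (gT : finGroupType) (G : {group gT}) (p : nat).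
Local Notation O := (pobj G p).
Local Open Scope group_scope.
Local Open Scope ring_scope.
Implicit Types (a b H K : {group gT}) (f F : {group gT} -> rat).

Lemma pobj_between a b K : a \in O -> K \in O -> a \subset b -> b \subset K -> b \in O.
Proof.
rewrite !inE => /and3P[_ _ ntA] /and3P[sKG pK _] sab sbK; apply/and3P; split.
- exact: subset_trans sbK sKG.
- exact: pgroupS sbK pK.
- by apply: contra ntA => /eqP b1; rewrite -subG1 -b1.
Qed.

Lemma sum_pobj_zeta_mu a K : a \in O -> K \in O ->
  \sum_(b in O) (a \subset b)%:R * mu b K = (a == K)%:R.
Proof.
move=> aO KO; rewrite -sum_zeta_mu big_mkcond /=; apply: eq_bigr => b _.
case: ifPn => // bO; have [sab|] := boolP (a \subset b); last by rewrite mul0r.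
have [sbK|/mu_eq0->] := boolP (b \subset K); last by rewrite mulr0.
by rewrite (pobj_between aO KO sab sbK) in bO.
Qed.

Lemma sum_pobj_mu_zeta H b : H \in O -> b \in O ->
  \sum_(a in O) mu H a * (a \subset b)%:R = (H == b)%:R.
Proof.
move=> HO bO; rewrite -sum_mu_zeta big_mkcond /=; apply: eq_bigr => a _.
case: ifPn => // aO; have [sHa|/mu_eq0->] := boolP (H \subset a); last by rewrite mul0r.
have [sab|] := boolP (a \subset b); last by rewrite mulr0.
by rewrite (pobj_between HO bO sHa sab) in aO.
Qed.

Lemma sum_pobj_delta a F : a \in O -> \sum_(K in O) (a == K)%:R * F K = F a.
Proof.
move=> aO; rewrite (bigD1 a) //= eqxx mul1r big1 ?addr0 // => K /andP[_ neKa].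
by rewrite eq_sym (negPf neKa) mul0r.
Qed.

Lemma pobj_zeta_inversion a f : a \in O ->
  \sum_(b in O) (a \subset b)%:R * \sum_(K in O) mu b K * f K = f a.
Proof.
move=> aO; under eq_bigr do rewrite mulr_sumr.
rewrite exchange_big -(sum_pobj_delta f aO); apply: eq_bigr => K KO.
by rewrite -(sum_pobj_zeta_mu aO KO) mulr_suml; apply: eq_bigr => b _; rewrite mulrA.
Qed.

Lemma pobj_mu_zeta_inversion b f : b \in O ->
  \sum_(a in O) (\sum_(H in O) f H * mu H a) * (a \subset b)%:R = f b.
Proof.
move=> bO; under eq_bigr do rewrite mulr_suml.
rewrite exchange_big -(sum_pobj_delta f bO); apply: eq_bigr => H HO.
rewrite eq_sym -(sum_pobj_mu_zeta HO bO) mulr_suml.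
by apply: eq_bigr => a _; rewrite [RHS]mulrC mulrA.
Qed.

(* Summing the Moebius function over a whole interval [1, K] gives 0. *)
Lemma sum_pobj_mu K : K \in O -> \sum_(H in O) mu H K = - mu1 K.
Proof.
move=> KO; have ntK : (1%G == K) = false.
  by move: KO; rewrite inE => /and3P[_ _]; rewrite eq_sym -val_eqE => /negPf.
have sum_mu0 : \sum_(L : {group gT}) mu L K = 0.
  transitivity (\sum_(L : {group gT}) (1%G \subset L)%:R * mu L K).
    by apply: eq_bigr => L _; rewrite sub1G mul1r.
  by rewrite sum_zeta_mu ntK.
move/eqP: sum_mu0; rewrite (bigD1 1%G) //= addrC addr_eq0 => /eqP <-.
rewrite big_mkcond [RHS]big_mkcond /=; apply: eq_bigr => H _.
case: ifPn => HO; first by move: HO; rewrite inE -val_eqE => /and3P[_ _ ->].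
have [sHK|/mu_eq0->] := boolP (H \subset K); last by case: ifP.
case: eqP => // /eqP ntH; move: KO HO; rewrite !inE -val_eqE ntH andbT.
by case/and3P=> sKG pK _ /negP[]; rewrite (subset_trans sHK sKG) (pgroupS sHK pK).
Qed.

Definition conj_invariant F := forall x a, x \in G -> F (a :^ x)%G = F a.

Lemma pobjJ a x : x \in G -> ((a :^ x)%G \in O) = (a \in O).
Proof.
move=> Gx; rewrite !inE /= -{1}(conjGid Gx) conjSg pgroupJ.
by rewrite !trivg_card1 cardJg.
Qed.

Lemma big_pobjJ F x : x \in G -> \sum_(a in O) F a = \sum_(a in O) F (a :^ x)%G.
Proof.
move=> Gx; rewrite (reindex (fun a => (a :^ x)%G)) /=; last exact: onW_bij (conjG_bij x).
by apply: eq_bigl => a; rewrite pobjJ.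
Qed.

Lemma homTE a b : (homT G a b)%:R = \sum_(x in G) ((a :^ x \subset b)%:R : rat).
Proof.
rewrite /homT /NGHK -sum1_card natr_sum [LHS]big_mkcond [RHS]big_mkcond /=.
by apply: eq_bigr => x _; rewrite inE; case: (x \in G); case: (_ \subset _).
Qed.

Section ConjInvariant.
Variable F : {group gT} -> rat.
Hypothesis FJ : conj_invariant F.

Lemma sum_homT_zetar a :
  \sum_(b in O) (homT G a b)%:R * F b = #|G|%:R * \sum_(b in O) (a \subset b)%:R * F b.
Proof.
under eq_bigr do rewrite homTE mulr_suml.
rewrite exchange_big /= mulr_natl -sumr_const; apply: eq_bigr => x Gx.
by rewrite (big_pobjJ _ Gx); apply: eq_bigr => b _; rewrite /= conjSg FJ.
Qed.

Lemma sum_homT_zetal b :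
  \sum_(a in O) F a * (homT G a b)%:R = #|G|%:R * \sum_(a in O) F a * (a \subset b)%:R.
Proof.
under eq_bigr do rewrite homTE mulr_sumr.
rewrite exchange_big /= mulr_natl -sumr_const; apply: eq_bigr => x Gx.
rewrite (big_pobjJ _ (groupVr Gx)); apply: eq_bigr => a _.
by rewrite /= conjsgKV FJ ?groupV.
Qed.

Lemma conj_invariant_sum_mur : conj_invariant (fun b => \sum_(K in O) mu b K * F K).
Proof.
move=> x b Gx /=; rewrite (big_pobjJ _ Gx).
by apply: eq_bigr => K _; rewrite muJ FJ.
Qed.

Lemma conj_invariant_sum_mul : conj_invariant (fun a => \sum_(H in O) F H * mu H a).
Proof.
move=> x a Gx /=; rewrite (big_pobjJ _ Gx).
by apply: eq_bigr => H _; rewrite muJ FJ.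
Qed.

End ConjInvariant.

(* [hom a b] counts the transporter [N_G(a, b)] modulo free actions of groups
   of orders [c a] and [d b] ([O^p C_G(a)] or [C_G(a)] on the left, [b] on the
   right). *)
Section TransporterQuotient.
Variables (hom : {group gT} -> {group gT} -> nat) (c d : {group gT} -> rat).
Hypotheses (cJ : conj_invariant c) (dJ : conj_invariant d).
Hypothesis hom_homT : {in O &, forall a b, (hom a b)%:R * c a * d b = (homT G a b)%:R}.

Lemma weighting_transporter_quotient : {in O, forall a, c a != 0} ->
  is_weighting O hom (fun b => #|G|%:R^-1 * d b * \sum_(K in O) mu b K * c K).
Proof.
move=> c_neq0 a aO; have ca0 := c_neq0 a aO; have g0 := natr_card_neq0 G.
transitivity ((#|G|%:R * c a)^-1 *
    \sum_(b in O) (homT G a b)%:R * \sum_(K in O) mu b K * c K).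
  rewrite mulr_sumr; apply: eq_bigr => b bO; rewrite -hom_homT //.
  by field; apply/andP.
rewrite sum_homT_zetar; last exact: conj_invariant_sum_mur.
by rewrite pobj_zeta_inversion // mulVf // mulf_neq0.
Qed.

Lemma coweighting_transporter_quotient : {in O, forall b, d b != 0} ->
  is_coweighting O hom (fun a => #|G|%:R^-1 * c a * \sum_(H in O) d H * mu H a).
Proof.
move=> d_neq0 b bO; have db0 := d_neq0 b bO; have g0 := natr_card_neq0 G.
transitivity ((#|G|%:R * d b)^-1 *
    \sum_(a in O) (\sum_(H in O) d H * mu H a) * (homT G a b)%:R).
  rewrite mulr_sumr; apply: eq_bigr => a aO; rewrite -hom_homT //.
  by field; apply/andP.
rewrite sum_homT_zetal; last exact: conj_invariant_sum_mul.
by rewrite pobj_mu_zeta_inversion // mulVf // mulf_neq0.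
Qed.

End TransporterQuotient.

Lemma homT_self K : homT G K K = #|'N_G(K)|.
Proof. by apply: eq_card => x; rewrite !inE. Qed.

Lemma NGHK_mul_cent (A : {group gT}) a b : A \subset 'C_G(a) ->
  (A * NGHK G a b \subset NGHK G a b)%g.
Proof.
move=> sAC; apply/subsetP => _ /mulsgP[y z Ay NGz ->].
have /setIP[Gy cay] := subsetP sAC y Ay; move: NGz; rewrite !inE => /andP[Gz sazb].
rewrite groupM // conjsgM; suff -> : a :^ y = a by [].
by apply/normP; apply: (subsetP (cent_sub a)).
Qed.

Lemma homF_homT a b : (homF G a b * #|'C_G(a)| = homT G a b)%N.
Proof. exact/card_rcosets_closed/NGHK_mul_cent. Qed.

Lemma homO_homT a b : b \subset G -> (homO G a b * #|b| = homT G a b)%N.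
Proof.
move=> sbG; apply: card_lcosets_closed; apply/subsetP => _ /mulsgP[y z NGy bz ->].
move: NGy; rewrite !inE => /andP[Gy sayb]; rewrite groupM ?(subsetP sbG z bz) //=.
by rewrite conjsgM -(conjGid bz) conjSg.
Qed.

Lemma centJ_in a x : x \in G -> 'C_G(a :^ x) = 'C_G(a) :^ x.
Proof. by move=> Gx; rewrite conjIg centJ conjGid. Qed.

Lemma conj_invariant_card : conj_invariant (fun K => #|K|%:R).
Proof. by move=> x a _ /=; rewrite cardJg. Qed.

Lemma conj_invariant_card_cent : conj_invariant (fun K => #|'C_G(K)|%:R).
Proof. by move=> x a Gx /=; rewrite centJ_in // cardJg. Qed.

Lemma conj_invariant_mu1 : conj_invariant (@mu1 gT).
Proof.
move=> x a _; rewrite /mu1 -(muJ x 1%G a); congr (mu _ _).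
by apply: val_inj; rewrite /= conjs1g.
Qed.

Lemma Oup_group_set (X : {set gT}) : group_set (Oup p X).
Proof. exact: group_set_bigcap. Qed.
Canonical Oup_group (X : {set gT}) := group (Oup_group_set X).

Lemma Oup_sub (X : {group gT}) : Oup p X \subset X.
Proof. by rewrite /Oup (bigcap_inf X) // normal_refl trivg_quotient pgroup1. Qed.

Lemma OupJ (X : {group gT}) x : Oup p (X :^ x) = Oup p X :^ x.
Proof.
rewrite /Oup -bigcapJ (reindex (fun N => (N :^ x)%G)) /=; last first.
  exact: onW_bij (conjG_bij x).
apply: eq_bigl => N /=; rewrite normalJ; case nNX: (N <| X) => //=.
have nXN := normal_norm nNX.
by rewrite /pgroup !card_quotient ?indexJg // normJ conjSg.
Qed.

Lemma homL_homT a b : (homL G p a b * #|Oup p 'C_G(a)| = homT G a b)%N.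
Proof.
apply: card_rcosets_closed; apply: NGHK_mul_cent.
exact: (Oup_sub 'C_G(a)%G).
Qed.

Lemma conj_invariant_card_Oup_cent : conj_invariant (fun K => #|Oup p 'C_G(K)|%:R).
Proof. by move=> x a Gx /=; rewrite centJ_in // (OupJ 'C_G(a)%G) cardJg. Qed.

Lemma pclasses_crep X : X \in pclasses G p -> crep X \in O /\ X = orbit 'JG G (crep X).
Proof.
case/imsetP => K KO ->; set c := crep _.
have cX : c \in orbit 'JG G K.
  by rewrite /c /crep; case: pickP => [//|/(_ K)]; rewrite orbit_refl.
split; last by apply/esym/orbit_eqP.
by case/orbitP: cX => x Gx <-; rewrite pobjJ.
Qed.

Lemma sum_pobj_pclasses F : conj_invariant F ->
  \sum_(K in O) F K = \sum_(X in pclasses G p) #|G : 'N(crep X)|%:R * F (crep X).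
Proof.
move=> FJ; have actsO : [acts G, on O | 'JG] by apply/actsP => x Gx K; exact: pobjJ.
have /and3P[/eqP coverO trivO _] := orbit_partition actsO.
rewrite -{1}coverO big_trivIset //; apply: eq_bigr => X XP.
have [_ eX] := pclasses_crep XP; rewrite (eq_bigr (fun _ => F (crep X))); last first.
  by move=> K; rewrite {1}eX => /orbitP[x Gx <-]; apply: FJ.
by rewrite big_const iter_addr_0 [in #|X|]eX card_orbit astab1JG indexgI mulr_natl.
Qed.

Lemma chi_sum_pclasses (hom : {group gT} -> {group gT} -> nat) c :
  conj_invariant c -> {in O, forall K, (hom K K)%:R * c K = #|'N_G(K)|%:R} ->
  \sum_(K in O) - (#|G|%:R^-1 * mu1 K * c K) =
  \sum_(X in pclasses G p) - mu1 (crep X) / (hom (crep X) (crep X))%:R.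
Proof.
move=> cJ homN; rewrite sum_pobj_pclasses; last first.
  by move=> x a Gx /=; rewrite conj_invariant_mu1 ?cJ.
apply: eq_bigr => X /pclasses_crep[KO _]; set K := crep X.
have NG0 := natr_card_neq0 'N_G(K); rewrite -homN // mulf_eq0 negb_or in NG0.
have /andP[hom0 c0] := NG0; have iG0 : (#|G : 'N(K)|%:R : rat) != 0.
  by rewrite pnatr_eq0 -lt0n indexg_gt0.
rewrite -(LagrangeI G 'N(K)) natrM -homN //.
by field; rewrite hom0 c0 iG0.
Qed.

End PSubgroupPoset.

Section Categories.
Variables (gT : finGroupType) (G : {group gT}) (p : nat).
Local Notation O := (pobj G p).
Local Notation g := (#|G|%:R : rat).
Local Open Scope group_scope.
Local Open Scope ring_scope.

Lemma const1_conj_invariant : conj_invariant G (fun _ => 1).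
Proof. by []. Qed.

Lemma poset_euler :
  [/\ is_weighting O (@homS gT) (fun H => \sum_(K in O) mu H K),
      is_coweighting O (@homS gT) (fun K => - mu1 K)
    & chi O (@homS gT) = \sum_(K in O) - mu1 K].
Proof.
have w : is_weighting O (@homS gT) (fun H => \sum_(K in O) mu H K).
  move=> a aO; rewrite -[RHS](pobj_zeta_inversion (fun _ => 1) aO).
  by apply: eq_bigr => b _; under [in RHS]eq_bigr do rewrite mulr1.
have cw : is_coweighting O (@homS gT) (fun K => - mu1 K).
  move=> b bO; rewrite -[RHS](pobj_mu_zeta_inversion (fun _ => 1) bO).
  apply: eq_bigr => a aO; rewrite -(sum_pobj_mu aO).
  by under [in RHS]eq_bigr do rewrite mul1r.
by split => //; rewrite (chiE w cw).
Qed.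

Lemma transporter_quotient_euler hom c :
  conj_invariant G c -> {in O, forall a, c a != 0} ->
  {in O &, forall a b, (hom a b)%:R * c a = (homT G a b)%:R} ->
  [/\ is_weighting O hom (fun H => g^-1 * \sum_(K in O) mu H K * c K),
      is_coweighting O hom (fun K => - (g^-1 * mu1 K * c K))
    & chi O hom =
        \sum_(X in pclasses G p) - mu1 (crep X) / (hom (crep X) (crep X))%:R].
Proof.
move=> cJ c0 homT_hom.
have homT_hom1 a b : a \in O -> b \in O -> (hom a b)%:R * c a * 1 = (homT G a b)%:R.
  by move=> aO bO; rewrite mulr1 homT_hom.
have w := weighting_transporter_quotient cJ homT_hom1 c0.
have cw := coweighting_transporter_quotient const1_conj_invariant homT_hom1
  (fun _ _ => oner_neq0 _).
have w' : is_weighting O hom (fun H => g^-1 * \sum_(K in O) mu H K * c K).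
  by apply: eq_in_weighting w => b _ /=; rewrite mulr1.
have cw' : is_coweighting O hom (fun K => - (g^-1 * mu1 K * c K)).
  apply: eq_in_coweighting cw => a aO /=.
  under eq_bigr do rewrite mul1r.
  by rewrite (sum_pobj_mu aO) mulrN mulrAC.
split => //; rewrite (chiE w' cw') (chi_sum_pclasses (hom := hom) cJ) // => K KO.
by rewrite homT_hom // homT_self.
Qed.

Lemma transporter_euler :
  [/\ is_weighting O (homT G) (fun H => g^-1 * \sum_(K in O) mu H K),
      is_coweighting O (homT G) (fun K => - (g^-1 * mu1 K))
    & chi O (homT G) =
        \sum_(X in pclasses G p) - mu1 (crep X) / (homT G (crep X) (crep X))%:R].
Proof.
have [w cw chiT] := transporter_quotient_euler const1_conj_invariant
  (fun _ _ => oner_neq0 _) (fun a b _ _ => mulr1 _).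
split => //.
  by apply: eq_in_weighting w => b _; under eq_bigr do rewrite mulr1.
by apply: eq_in_coweighting cw => a _; rewrite mulr1.
Qed.

Lemma chi_poset_transporter : chi O (@homS gT) = g * chi O (homT G).
Proof.
have [_ _ ->] := poset_euler; have [w cw _] := transporter_euler.
rewrite (chiE w cw) mulr_sumr; apply: eq_bigr => K _.
by rewrite mulrN mulrA mulfV ?natr_card_neq0 // mul1r.
Qed.

Lemma orbit_euler :
  [/\ is_weighting O (homO G) (fun H => g^-1 * #|H|%:R * \sum_(K in O) mu H K),
      is_coweighting O (homO G) (fun K => g^-1 * \sum_(H in O) #|H|%:R * mu H K)
    & chi O (homO G) = g^-1 * \sum_(H in O) \sum_(K in O) #|H|%:R * mu H K].
Proof.
have homT_homO a b : a \in O -> b \in O ->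
    (homO G a b)%:R * 1 * #|b|%:R = (homT G a b)%:R :> rat.
  move=> _; rewrite inE => /and3P[sbG _ _].
  by rewrite mulr1 -natrM homO_homT.
have w := weighting_transporter_quotient const1_conj_invariant homT_homO
  (fun _ _ => oner_neq0 _).
have cw := coweighting_transporter_quotient (conj_invariant_card (G := G)) homT_homO
  (fun b _ => natr_card_neq0 b).
have w' : is_weighting O (homO G) (fun H => g^-1 * #|H|%:R * \sum_(K in O) mu H K).
  by apply: eq_in_weighting w => b _; under eq_bigr do rewrite mulr1.
have cw' : is_coweighting O (homO G) (fun K => g^-1 * \sum_(H in O) #|H|%:R * mu H K).
  by apply: eq_in_coweighting cw => a _; rewrite mulr1.
by split => //; rewrite (chiE w' cw') -mulr_sumr exchange_big.
Qed.

End Categories.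

Theorem theorem3p2 (gT : finGroupType) (G : {group gT}) (p : nat) (pp : prime p) :
  let O := pobj G p in
  let g := (#|G|%:R : rat) in
  let Cp := fun K : {group gT} => (#|Oup p 'C_G(K)%g|%:R : rat) in
  let C := fun K : {group gT} => (#|'C_G(K)%g|%:R : rat) in
  let H_ := fun H : {group gT} => (#|H|%:R : rat) in
  (* (i) *)
  [/\ is_weighting O (@homS gT) (fun H => \sum_(K in O) mu H K),
      is_coweighting O (@homS gT) (fun K => - mu1 K)
    & chi O (@homS gT) = g * chi O (homT G)]
  /\
  (* (ii) *)
  [/\ is_weighting O (homT G) (fun H => g^-1 * \sum_(K in O) mu H K),
      is_coweighting O (homT G) (fun K => - (g^-1 * mu1 K))
    & chi O (homT G) =
        \sum_(X in pclasses G p) (- mu1 (crep X)) / (homT G (crep X) (crep X))%:R]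
  /\
  (* (iii) *)
  [/\ is_weighting O (homL G p) (fun H => g^-1 * \sum_(K in O) mu H K * Cp K),
      is_coweighting O (homL G p) (fun K => - (g^-1 * mu1 K * Cp K))
    & chi O (homL G p) =
        \sum_(X in pclasses G p) (- mu1 (crep X)) / (homL G p (crep X) (crep X))%:R]
  /\
  (* (iv) *)
  [/\ is_weighting O (homF G) (fun H => g^-1 * \sum_(K in O) mu H K * C K),
      is_coweighting O (homF G) (fun K => - (g^-1 * mu1 K * C K))
    & chi O (homF G) =
        \sum_(X in pclasses G p) (- mu1 (crep X)) / (homF G (crep X) (crep X))%:R]
  /\
  (* (v) *)
  [/\ is_weighting O (homO G) (fun H => g^-1 * H_ H * \sum_(K in O) mu H K),
      is_coweighting O (homO G) (fun K => g^-1 * \sum_(H in O) H_ H * mu H K)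
    & chi O (homO G) = g^-1 * \sum_(H in O) \sum_(K in O) H_ H * mu H K].
Proof.
move=> O g Cp C H_.
have [wS cwS _] := poset_euler G p.
have homT_homL a b : (homL G p a b)%:R * Cp a = (homT G a b)%:R.
  by rewrite -natrM homL_homT.
have homT_homF a b : (homF G a b)%:R * C a = (homT G a b)%:R.
  by rewrite -natrM homF_homT.
split; first by split; rewrite // chi_poset_transporter.
split; first exact: transporter_euler.
split; first exact: transporter_quotient_euler (conj_invariant_card_Oup_cent (G := G) p)
  (fun a _ => natr_card_neq0 (Oup_group p 'C_G(a)%G)) (fun a b _ _ => homT_homL a b).
split; first exact: transporter_quotient_euler (conj_invariant_card_cent (G := G))
  (fun a _ => natr_card_neq0 'C_G(a)%G) (fun a b _ _ => homT_homF a b).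
exact: orbit_euler.
Qed.
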